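(* Assume $t_m=1$. If $w$ is a trident of $u_\beta$ with rooted tooth $X=1$ and $Y\ne0$ is a non-rooted tooth of $w$, then $t_Y=t_1$.
   Context: $\beta>1$ is a simple Parry number with $d_\beta(1)=t_1\cdots t_{m-1}t_m$, $m\ge2$, nonnegative integer digits, $t_1\ge1$, satisfying the Parry condition ($t_i\cdots t_m0^\omega$ lexicographically strictly smaller than $t_1\cdots t_m0^\omega$ for $2\le i\le m$). $\varphi$ is the substitution on $\mathcal A=\{0,\dots,m-1\}$ with $\varphi(k)=0^{t_{k+1}}(k+1)$ for $0\le k\le m-2$, $\varphi(m-1)=0^{t_m}$, and $u_\beta=\lim_n\varphi^n(0)$ is its fixed point. A factor $w$ is left special if at least two distinct letters $a$ make $aw$ a factor of $u_\beta$. A factor $w$ is a trident if there exist letters $X,Y,Z\in\mathcal A$ such that: $wX$ is a left special factor; $wY$ and $wZ$ are factors that are not left special; and the unique left extensions of $wY$ and $wZ$ are distinct. $X$ is the rooted tooth and $Y,Z$ the non-rooted teeth. *)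

From mathcomp Require Import all_boot.
Set Implicit Arguments.
Unset Strict Implicit.
Unset Printing Implicit Defensive.

(* The digit string d_beta(1) = t_1 ... t_m is represented by t : seq nat,
   with t_i = nth 0 t (i-1) and m = size t.  Letters of the alphabet
   A = {0,...,m-1} are natural numbers. *)

Definition tdig (t : seq nat) (i : nat) : nat := nth 0 t i.-1.

Definition lex_lt (a b : nat -> nat) : Prop :=
  exists n, (forall k, k < n -> a k = b k) /\ a n < b n.

Definition parry_cond (t : seq nat) : Prop :=
  forall i, 2 <= i <= size t ->
    lex_lt (fun k => nth 0 t (i.-1 + k)) (fun k => nth 0 t k).

Definition phi (t : seq nat) (k : nat) : seq nat :=
  if k.+1 < size t then nseq (tdig t k.+1) 0 ++ [:: k.+1]
  else nseq (tdig t (size t)) 0.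

Definition phiw (t : seq nat) (s : seq nat) : seq nat :=
  flatten (map (phi t) s).

(* u_beta = lim phi^n(0): its k-th letter is the k-th letter of
   phi^{k+1}(0) (which has length > k and is a prefix of the limit). *)
Definition ubeta (t : seq nat) (k : nat) : nat :=
  nth 0 (iter k.+1 (phiw t) [:: 0]) k.

Definition factor (t : seq nat) (w : seq nat) : Prop :=
  exists i, w = [seq ubeta t (i + j) | j <- iota 0 (size w)].

Definition left_special (t : seq nat) (w : seq nat) : Prop :=
  exists a b, a <> b /\ factor t (a :: w) /\ factor t (b :: w).

Definition trident_with (t : seq nat) (w : seq nat) (X Y Z : nat) : Prop :=
  [/\ X < size t, Y < size t & Z < size t] /\
  left_special t (rcons w X) /\
  (factor t (rcons w Y) /\ ~ left_special t (rcons w Y)) /\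
  (factor t (rcons w Z) /\ ~ left_special t (rcons w Z)) /\
  (exists a b, [/\ a <> b, factor t (a :: rcons w Y)
                          & factor t (b :: rcons w Z)]).

From mathcomp Require Import all_boot zify.

(* Every nonzero letter k of u_beta closes a block phi(k-1) = 0^{t_k} k of the
   desubstitution, and the letter just before a block is the last letter of the
   previous block, i.e. j+1 or 0 for the previous letter j.  Following blocks
   backwards shows that a nonzero letter is never preceded by a larger one.
   Now let w be a trident with rooted tooth 1 and non-rooted tooth Y >= 2, and
   suppose t_Y < t_1 (Parry gives t_Y <= t_1).  Every 1 is preceded by t_1
   zeros, so w is longer than t_Y, as otherwise w1 has only the left extension
   0.  Reading w along an occurrence of w1, its letter at distance t_Y + 1
   before the end is then 0; reading it along an occurrence of wY, that letter
   precedes the block of Y, so it is 0 only if the previous letter is m-1 > Y-1,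
   which is impossible. *)

Set Implicit Arguments.
Unset Strict Implicit.
Unset Printing Implicit Defensive.

Lemma parry_tdig_le t i : parry_cond t -> 2 <= i <= size t -> tdig t i <= tdig t 1.
Proof.
move=> parry /parry [[|n] [eq_pref lt_n]]; rewrite /tdig /=.
  by move: lt_n; rewrite addn0 => /ltnW.
by rewrite -(eq_pref 0) ?addn0.
Qed.

Lemma nth_phi t k o :
  nth 0 (phi t k) o = if (k.+1 < size t) && (o == tdig t k.+1) then k.+1 else 0.
Proof.
rewrite /phi; case: ifP => _ /=; last by rewrite nth_nseq if_same.
rewrite nth_cat size_nseq nth_nseq; case: ltngtP => // [lt_o|->]; last by rewrite subnn.
by rewrite nth_default //= subn_gt0.
Qed.

Lemma last_phi t k : last 0 (phi t k) = if k.+1 < size t then k.+1 else 0.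
Proof.
rewrite /phi; case: ifP => _; first by rewrite last_cat.
by elim: (tdig t _).
Qed.

Lemma phiw_cat t s1 s2 : phiw t (s1 ++ s2) = phiw t s1 ++ phiw t s2.
Proof. by rewrite /phiw map_cat flatten_cat. Qed.

Lemma phiw_rcons t s x : phiw t (rcons s x) = phiw t s ++ phi t x.
Proof. by rewrite -cats1 phiw_cat /phiw /= cats0. Qed.

Lemma factor_nth t s :
  factor t s -> exists i, forall j, j < size s -> nth 0 s j = ubeta t (i + j).
Proof.
case=> i def_s; exists i => j lt_j.
by rewrite def_s (nth_map 0) ?size_iota ?nth_iota.
Qed.

Section UBeta.

Variable t : seq nat.
Hypothesis size_t_gt1 : 1 < size t.
Hypothesis tdig1_gt0 : 0 < tdig t 1.
Hypothesis tdig_last_gt0 : 0 < tdig t (size t).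

Local Notation u := (ubeta t).

Lemma size_phi_gt0 k : 0 < size (phi t k).
Proof. by rewrite /phi; case: ifP => _; rewrite ?size_cat ?size_nseq ?addn1. Qed.

Lemma leq_size_phiw s : size s <= size (phiw t s).
Proof.
elim: s => //= x s IHs; rewrite /phiw /= size_cat -/(phiw t s).
by have := size_phi_gt0 x; lia.
Qed.

Definition phin n := iter n (phiw t) [:: 0].

Lemma phinS n : phin n.+1 = phiw t (phin n).
Proof. by []. Qed.

Lemma phin_grow n : exists2 s, s != [::] & phin n.+1 = phin n ++ s.
Proof.
elim: n => [|n [s nz_s def_n1]].
  exists (nseq (tdig t 1).-1 0 ++ [:: 1]); first by rewrite -size_eq0 size_cat addn1.
  by rewrite phinS (phiw_rcons _ [::]) /phi size_t_gt1; case: (tdig t 1) tdig1_gt0.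
exists (phiw t s); last by rewrite phinS {1}def_n1 phiw_cat.
by rewrite -size_eq0 -lt0n (leq_trans _ (leq_size_phiw s)) // lt0n size_eq0.
Qed.

Lemma phin_prefix m n : m <= n -> exists s, phin n = phin m ++ s.
Proof.
move/subnK <-; elim: (n - m) => [|d [s def_dm]]; first by exists [::]; rewrite cats0.
have [s' _ def_dm1] := phin_grow (d + m).
by exists (s ++ s'); rewrite addSn def_dm1 def_dm catA.
Qed.

Lemma size_phin n : n < size (phin n).
Proof.
elim: n => // n IHn; have [s nz_s ->] := phin_grow n.
by rewrite size_cat -addn1 leq_add // lt0n size_eq0.
Qed.

Lemma ubeta_phin n k : k < size (phin n) -> u k = nth 0 (phin n) k.
Proof.
have nth_phin m p : m <= p -> k < size (phin m) -> nth 0 (phin p) k = nth 0 (phin m) k.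
  by move=> le_mp lt_k; have [s ->] := phin_prefix le_mp; rewrite nth_cat lt_k.
move=> lt_k; rewrite /ubeta -/(phin k.+1).
case: (leqP n k.+1) => [le_n|/ltnW le_n]; first by rewrite (nth_phin n).
by rewrite (nth_phin k.+1 n) // ltnW ?size_phin.
Qed.

Lemma ubeta0 : u 0 = 0.
Proof. exact: (@ubeta_phin 0). Qed.

Lemma take_phin n k : k <= size (phin n) -> take k (phin n) = mkseq u k.
Proof.
move=> le_k; apply: (@eq_from_nth _ 0) => [|j]; rewrite size_take_min ?size_mkseq; first by lia.
by move=> lt_j; rewrite nth_take ?nth_mkseq ?(@ubeta_phin n) //; lia.
Qed.

(* as u = phi(u), the image of the q-th letter of u starts at this position *)
Definition block_start q := size (phiw t (mkseq u q)).

Lemma block_startS q : block_start q.+1 = block_start q + size (phi t (u q)).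
Proof. by rewrite /block_start mkseqS phiw_rcons size_cat. Qed.

Lemma ubeta_block q o :
  o < size (phi t (u q)) -> u (block_start q + o) = nth 0 (phi t (u q)) o.
Proof.
move=> lt_o; have lt_q := size_phin q.
have def_q1 : phin q.+1 = phiw t (mkseq u q) ++ phi t (u q) ++ phiw t (drop q.+1 (phin q)).
  rewrite phinS -{1}(cat_take_drop q.+1 (phin q)) take_phin //.
  by rewrite phiw_cat mkseqS phiw_rcons catA.
rewrite (@ubeta_phin q.+1); last by rewrite def_q1 !size_cat -/(block_start q); lia.
by rewrite def_q1 nth_cat -/(block_start q) ltnNge leq_addr /= addKn nth_cat lt_o.
Qed.

Lemma ubeta_before_block q : u (block_start q.+1).-1 = last 0 (phi t (u q)).
Proof.
have gt0 := size_phi_gt0 (u q).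
have -> : (block_start q.+1).-1 = block_start q + (size (phi t (u q))).-1.
  by rewrite block_startS; lia.
by rewrite ubeta_block ?nth_last // ltn_predL.
Qed.

Lemma block_cover r : exists q, block_start q <= r < block_start q.+1.
Proof.
elim: r => [|r [q /andP [le_qr lt_rq]]].
  by exists 0; rewrite block_startS size_phi_gt0.
case: (ltnP r.+1 (block_start q.+1)) => [lt_r1|le_q1]; first by exists q; rewrite lt_r1 andbT ltnW.
by exists q.+1; rewrite le_q1 (block_startS q.+1); have := size_phi_gt0 (u q.+1); lia.
Qed.

Lemma ubeta_desubst r : 0 < u r -> exists q, [/\ u q = (u r).-1,
  r = block_start q + tdig t (u r) & forall j, j < tdig t (u r) -> u (block_start q + j) = 0].
Proof.
move=> ur_gt0; have [q /andP [le_qr lt_rq]] := block_cover r.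
have lt_o : r - block_start q < size (phi t (u q)) by move: lt_rq; rewrite block_startS; lia.
have := ubeta_block lt_o; rewrite subnKC // nth_phi.
case: ifP => [/andP [_ /eqP def_o]|_ ur0]; last by rewrite ur0 in ur_gt0.
move=> def_ur; exists q; rewrite def_ur /=; split; [by [] | lia | move=> j lt_j].
by rewrite ubeta_block ?nth_phi ?(ltn_eqF lt_j) ?andbF //; lia.
Qed.

Lemma ubeta_pred_le r : 0 < u r -> u r.-1 <= u r.
Proof.
move: r; suff pred_le k r : u r = k -> 0 < k -> u r.-1 <= k by move=> r; exact: pred_le.
elim: k r => // k IHk r def_ur _.
have [|q []] := ubeta_desubst (r := r); first by rewrite def_ur.
rewrite def_ur /= => uq -> zeros.
case: (posnP (tdig t k.+1)) => [tk0|tk_gt0]; last by rewrite -subn1 -addnBA // zeros //; lia.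
case: q uq zeros => [|q] uq zeros.
  by move: def_ur; rewrite tk0 addn0 /block_start /= ubeta0.
rewrite tk0 addn0 ubeta_before_block last_phi; case: ifP => // _.
case: k IHk uq tk0 {def_ur zeros} => [|k] IHk uq tk0; first by move: tdig1_gt0; rewrite tk0.
by rewrite ltnS (IHk q.+1).
Qed.

Lemma factor_zeros_before_one w j :
  factor t (rcons w 1) -> size w - tdig t 1 <= j < size w -> nth 0 w j = 0.
Proof.
move=> /factor_nth [i nth_w] /andP [ge_j lt_j].
have w_end : u (i + size w) = 1 by rewrite -nth_w ?size_rcons // nth_rcons ltnn eqxx.
have [|q [_ def_end zeros]] := ubeta_desubst (r := i + size w); first by rewrite w_end.
rewrite w_end in def_end zeros.
have -> : nth 0 w j = u (i + j) by rewrite -nth_w ?size_rcons ?nth_rcons ?lt_j //; lia.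
have -> : i + j = block_start q + (tdig t 1 - (size w - j)) by lia.
by apply: zeros; lia.
Qed.

Lemma factor_nonzero_before_block w k :
  factor t (rcons w k) -> 1 < k < size t -> tdig t k < size w ->
  nth 0 w (size w - (tdig t k).+1) != 0.
Proof.
move=> /factor_nth [i nth_w] /andP [gt1_k lt_k_m] long.
have w_end : u (i + size w) = k by rewrite -nth_w ?size_rcons // nth_rcons ltnn eqxx.
have [|q [uq def_end _]] := ubeta_desubst (r := i + size w); first by rewrite w_end; lia.
rewrite w_end in uq def_end.
case: q uq def_end => [|q] uq def_end; first by move: uq; rewrite ubeta0; lia.
have -> : nth 0 w (size w - (tdig t k).+1) = u (block_start q.+1).-1.
  have -> : (block_start q.+1).-1 = i + (size w - (tdig t k).+1) by lia.
  by rewrite -nth_w ?size_rcons ?nth_rcons ?ifT //; lia.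
rewrite ubeta_before_block last_phi; case: ltnP => // ge_m.
by have := ubeta_pred_le (r := q.+1); rewrite uq /=; lia.
Qed.

Lemma trident_tooth_tdig w Y Z :
  parry_cond t -> trident_with t w 1 Y Z -> Y <> 0 -> tdig t Y = tdig t 1.
Proof.
move=> parry [[_ lt_Y_m _] [[a [b [neq_ab [fa fb]]]] [[fY nls_Y] _]]] nz_Y.
have gt1_Y : 1 < Y by case: Y nz_Y nls_Y {lt_Y_m fY} => [|[|Y]] // _ []; exists a, b.
have le_Y : tdig t Y <= tdig t 1 by apply: parry_tdig_le; rewrite // gt1_Y ltnW.
apply/eqP; rewrite eqn_leq le_Y leqNgt; apply/negP => lt_Y.
case: (leqP (size w) (tdig t Y)) => [short|long].
  have ext0 c : factor t (c :: rcons w 1) -> c = 0.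
    move=> fc; have /= := factor_zeros_before_one (w := c :: w) (j := 0) fc.
    by apply; lia.
  by apply: neq_ab; rewrite (ext0 a fa) (ext0 b fb).
have : nth 0 w (size w - (tdig t Y).+1) != 0.
  by apply: factor_nonzero_before_block; rewrite ?gt1_Y.
have /= -> // := factor_zeros_before_one (w := a :: w) (j := (size w - (tdig t Y).+1).+1) fa.
lia.
Qed.

End UBeta.

Theorem mainTheorem10 (t : seq nat) :
  2 <= size t ->
  1 <= tdig t 1 ->
  parry_cond t ->
  tdig t (size t) = 1 ->
  forall (w : seq nat) (Y Z : nat),
    trident_with t w 1 Y Z ->
    Y <> 0 ->
    tdig t Y = tdig t 1.
Proof.
move=> size_t_gt1 tdig1_gt0 parry tdig_last w Y Z trident nz_Y.
by apply: (trident_tooth_tdig size_t_gt1 tdig1_gt0 _ parry trident nz_Y); rewrite tdig_last.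
Qed.
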